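(* Let $H\in(1/2,1)$ and $c\in(0,2^{2H-2})$, and let $T^\circ$ be the $\mathbb{N}$-valued random variable with \[ P(T^\circ=1)=c\,L^\circ_H(\{1,2\})=c,\qquad P(T^\circ=k)=c\,D^\circ_H(\{1,k+1\},\{2,3,\dots,k\})\ \ (k\ge2). \] Then $E(T^\circ)=\infty$, and there is a slowly varying function $L_2$ (depending on the parameters) such that $P(T^\circ>t)=t^{1-2H}L_2(t)$.
   Context: For a finite set $A=\{i_0<\dots<i_k\}\subset\mathbb{N}\cup\{0\}$ with $|A|\ge1$ define $L^\circ_H(A)=\prod_{j=1}^{k}|i_j-i_{j-1}|^{2H-2}$ (equal to $1$ if $|A|=1$), and for disjoint finite $A\ne\emptyset$, $B$ define $D^\circ_H(A,B)=\sum_{B'\subseteq B}(-1)^{|B'|}c^{|B'|}L^\circ_H(A\cup B')$. Equivalently, $T^\circ$ has the law of $\min\{i\ge1:X^*_i=1\}$ for the GBP-II$^*$ process $(X^*_i)_{i\in\mathbb{N}}$, the $\{0,1\}$-valued process with $P(\bigcap_{i\in A}\{X^*_i=1\}\cap\bigcap_{i\in B}\{X^*_i=0\})=c^{|A|}D^\circ_H(A\cup\{0\},B)$ for disjoint finite $A,B\subset\mathbb{N}$; in that process successive gaps between 1's are i.i.d. copies of $T^\circ$. *)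

From Stdlib Require Import Reals Lra Lia List Arith.
From Coquelicot Require Import Coquelicot.
Import ListNotations.
Open Scope R_scope.

(* Finite subsets of N ∪ {0} are represented by lists of naturals; the
   set-union A ∪ B' is turned into the increasing enumeration i_0<...<i_k
   by insertion sort. *)
Fixpoint insert_nat (x : nat) (l : list nat) : list nat :=
  match l with
  | [] => [x]
  | y :: l' => if Nat.leb x y then x :: l else y :: insert_nat x l'
  end.

Fixpoint sort_nat (l : list nat) : list nat :=
  match l with
  | [] => []
  | x :: l' => insert_nat x (sort_nat l')
  end.

(* all sub-lists (= all subsets B' of B when B has no repetitions) *)
Fixpoint sublists (l : list nat) : list (list nat) :=
  match l with
  | [] => [[]]
  | x :: l' => let s := sublists l' in s ++ map (cons x) s
  end.

Definition gapR (i j : nat) : R := INR (if Nat.leb i j then j - i else i - j).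

Fixpoint Lprod (H : R) (x : nat) (l : list nat) : R :=
  match l with
  | [] => 1
  | y :: l' => Rpower (gapR x y) (2 * H - 2) * Lprod H y l'
  end.

(* L°_H(A) for A given by its increasing enumeration (1 if |A| <= 1) *)
Definition Lcirc_sorted (H : R) (l : list nat) : R :=
  match l with
  | [] => 1
  | x :: l' => Lprod H x l'
  end.

Definition Lcirc (H : R) (A : list nat) : R := Lcirc_sorted H (sort_nat A).

Definition Dcirc (H c : R) (A B : list nat) : R :=
  fold_right Rplus 0
    (map (fun B' => (-1) ^ length B' * c ^ length B' * Lcirc H (A ++ B'))
         (sublists B)).

Definition pT (H c : R) (k : nat) : R :=
  match k with
  | 0 => 0
  | 1 => c * Lcirc H [1%nat; 2%nat]
  | S k' => c * Dcirc H c [1%nat; S k] (seq 2 k')   (* {2,...,k} *)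
  end.

Definition ET_partial (H c : R) (n : nat) : R :=
  sum_n (fun k => INR k * pT H c k) n.

Definition tailT (H c : R) (t : R) : R :=
  Series (fun k => if Rlt_dec t (INR k) then pT H c k else 0).

Definition slowly_varying (L : R -> R) : Prop :=
  (exists x0, forall x, x0 < x -> 0 < L x) /\
  (forall lam, 0 < lam -> is_lim (fun x => L (lam * x) / L x) p_infty 1).

From Stdlib Require Import Reals Lra Lia List Arith.
From Coquelicot Require Import Coquelicot.
Import ListNotations.
Open Scope R_scope.

(* Let u_0 = 1 and u_n = c n^(2H-2), the probability that X*_n = 1.  Expanding D°
   along its first point shows that p_k = P(T° = k) solves the renewal equation
   u_(m+1) = sum_(i <= m) u_i p_(m+1-i).  Since c <= 2^(2H-2) the sequence u is
   log-convex, so Kaluza's theorem gives p >= 0, and the tail q_n = P(T° > n) is the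
   convolution inverse of u, hence nonnegative because u is a positive null sequence.
   With beta = 2 - 2H, u is asymptotic to a multiple of the coefficients a of
   (1 - z)^(beta - 1); as a (1 - z)^(-beta) = 1 / (1 - z), convolving q * u = 1 with
   the coefficients b of (1 - z)^(-beta) gives q * (b * u) = sum b ~ n^beta / Gamma(1 + beta),
   where b * u tends to a positive constant.  So q_0 + ... + q_n is regularly varying of
   index beta and, q being monotone, q_n ~ K n^(beta - 1) = K n^(1 - 2H) with K > 0.
   Therefore E(T°) = sum q_n = oo and t^(2H-1) P(T° > t) has a positive limit. *)

Fixpoint sum_lt (f : nat -> R) (n : nat) : R :=
  match n with O => 0 | S n' => sum_lt f n' + f n' end.

Lemma sum_lt_S f n : sum_lt f (S n) = sum_lt f n + f n.
Proof. reflexivity. Qed.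

Lemma sum_lt_ext f g n : (forall i, (i < n)%nat -> f i = g i) -> sum_lt f n = sum_lt g n.
Proof.
  induction n; intros Hfg; simpl; auto.
  rewrite IHn by (intros; apply Hfg; lia). rewrite Hfg by lia. reflexivity.
Qed.

Lemma sum_lt_Sl f n : sum_lt f (S n) = f 0%nat + sum_lt (fun i => f (S i)) n.
Proof. induction n; simpl in *; [ring | rewrite IHn; ring]. Qed.

Lemma sum_lt_scal f k n : sum_lt (fun i => k * f i) n = k * sum_lt f n.
Proof. induction n; simpl; [ring | rewrite IHn; ring]. Qed.

Lemma sum_lt_plus f g n : sum_lt (fun i => f i + g i) n = sum_lt f n + sum_lt g n.
Proof. induction n; simpl; [ring | rewrite IHn; ring]. Qed.

Lemma sum_lt_minus f g n : sum_lt (fun i => f i - g i) n = sum_lt f n - sum_lt g n.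
Proof. induction n; simpl; [ring | rewrite IHn; ring]. Qed.

Lemma sum_lt_zero n : sum_lt (fun _ => 0) n = 0.
Proof. induction n; simpl; [ring | rewrite IHn; ring]. Qed.

Lemma sum_lt_nonneg f n : (forall i, (i < n)%nat -> 0 <= f i) -> 0 <= sum_lt f n.
Proof.
  induction n; simpl; intros Hf; [lra|].
  pose proof (Hf n ltac:(lia)). pose proof (IHn ltac:(intros; apply Hf; lia)). lra.
Qed.

Lemma sum_lt_le f g n : (forall i, (i < n)%nat -> f i <= g i) -> sum_lt f n <= sum_lt g n.
Proof.
  intros Hfg.
  assert (Hd : 0 <= sum_lt (fun i => g i - f i) n)
    by (apply sum_lt_nonneg; intros i Hi; specialize (Hfg i Hi); lra).
  rewrite sum_lt_minus in Hd. lra.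
Qed.

Lemma sum_lt_abs g n : Rabs (sum_lt g n) <= sum_lt (fun i => Rabs (g i)) n.
Proof.
  induction n; simpl; [rewrite Rabs_R0; lra|].
  eapply Rle_trans; [apply Rabs_triang | lra].
Qed.

Lemma sum_lt_rev f n : sum_lt f n = sum_lt (fun k => f (n - 1 - k)%nat) n.
Proof.
  induction n; [reflexivity|].
  rewrite (sum_lt_Sl (fun k => f (S n - 1 - k)%nat) n). cbn [sum_lt]. rewrite IHn.
  replace (S n - 1 - 0)%nat with n by lia.
  rewrite (sum_lt_ext (fun k => f (n - 1 - k)%nat) (fun k => f (S n - 1 - S k)%nat))
    by (intros; f_equal; lia).
  ring.
Qed.

Lemma sum_lt_indicator M K n :
  sum_lt (fun i => if Nat.ltb i M then K else 0) n = INR (Nat.min n M) * K.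
Proof.
  induction n; [simpl; ring|]. cbn [sum_lt]. rewrite IHn.
  destruct (Nat.ltb n M) eqn:E.
  - apply Nat.ltb_lt in E. replace (Nat.min (S n) M) with (S (Nat.min n M)) by lia.
    rewrite S_INR. ring.
  - apply Nat.ltb_ge in E. replace (Nat.min (S n) M) with M by lia.
    replace (Nat.min n M) with M by lia. ring.
Qed.

Lemma sum_lt_indicator_le M K n : 0 <= K ->
  sum_lt (fun i => if Nat.ltb i M then K else 0) n <= INR M * K.
Proof.
  intros HK. rewrite sum_lt_indicator. apply Rmult_le_compat_r; auto. apply le_INR. lia.
Qed.

Lemma sum_lt_exchange_triangle (G : nat -> nat -> R) n :
  sum_lt (fun m => sum_lt (G m) (S m)) (S n) =
  sum_lt (fun k => sum_lt (fun j => G (k + j)%nat k) (S (n - k))) (S n).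
Proof.
  induction n; [simpl; ring|].
  rewrite !(sum_lt_S _ (S n)), IHn.
  rewrite (sum_lt_ext (fun k => sum_lt (fun j => G (k + j)%nat k) (S (S n - k)))
     (fun k => sum_lt (fun j => G (k + j)%nat k) (S (n - k)) + G (S n) k)).
  - rewrite sum_lt_plus, sum_lt_S. replace (S n - S n)%nat with 0%nat by lia.
    simpl. rewrite Nat.add_0_r. ring.
  - intros k Hk. replace (S n - k)%nat with (S (n - k)) by lia. rewrite sum_lt_S.
    do 2 f_equal. lia.
Qed.

Lemma sum_n_sum_lt a n : sum_n a n = sum_lt a (S n).
Proof.
  induction n; [rewrite sum_O; simpl; symmetry; apply Rplus_0_l|].
  rewrite sum_Sn, IHn. reflexivity.
Qed.

(** * Real powers *)

Lemma exp_le_compat x y : x <= y -> exp x <= exp y.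
Proof. intros [Hlt | <-]; [left; apply exp_increasing; exact Hlt | lra]. Qed.

Lemma INR_succ_pos n : 0 < INR n + 1.
Proof. pose proof (pos_INR n); lra. Qed.

Lemma Rpower_pos a y : 0 < Rpower a y.
Proof. unfold Rpower. apply exp_pos. Qed.

Lemma Rpower_1_base y : Rpower 1 y = 1.
Proof. unfold Rpower. rewrite ln_1, Rmult_0_r, exp_0. reflexivity. Qed.

Lemma Rpower_inv_base x b : 0 < x -> Rpower (/ x) b = / Rpower x b.
Proof. intros. unfold Rpower. rewrite ln_Rinv by auto. rewrite <- exp_Ropp. f_equal. ring. Qed.

Lemma Rpower_split a b y : 0 < a -> 0 < b -> Rpower b y = Rpower a y * Rpower (b / a) y.
Proof.
  intros. rewrite Rpower_mult_distr by (try apply Rdiv_lt_0_compat; lra). f_equal. field. lra.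
Qed.

Lemma Rpower_1_minus x b : 0 < x -> Rpower x (1 - b) = x / Rpower x b.
Proof. intros Hx. unfold Rminus. rewrite Rpower_plus, Rpower_1, Rpower_Ropp by auto. reflexivity. Qed.

Lemma continuity_pt_Rpower_base b x0 : 0 < x0 -> continuity_pt (fun x => Rpower x b) x0.
Proof.
  intros Hx. apply derivable_continuous_pt. exists (b * / x0 * exp (b * ln x0)).
  apply is_derive_Reals. unfold Rpower. auto_derive; [lra | ring].
Qed.

Lemma Rpower_bernoulli_le y t : 0 <= y <= 1 -> -1 < t -> Rpower (1 + t) y <= 1 + y * t.
Proof.
  intros Hy Ht.
  set (g := fun s => 1 + y * s - exp (y * ln (1 + s))).
  set (g' := fun s => y - y * exp ((y - 1) * ln (1 + s))).
  assert (Dg : forall s, -1 < s -> is_derive g s (g' s)).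
  { intros s Hs. unfold g, g'. auto_derive; [lra|].
    replace ((y - 1) * ln (1 + s)) with (y * ln (1 + s) + - ln (1 + s)) by ring.
    rewrite exp_plus, exp_Ropp, exp_ln by lra. field. lra. }
  assert (Hmin : -1 < Rmin 0 t) by (apply Rmin_glb_lt; lra).
  destruct (MVT_gen g 0 t g') as [xi [Hxi Heq]].
  - intros x Hx. apply Dg. lra.
  - intros x Hx. apply derivable_continuous_pt. exists (g' x).
    apply is_derive_Reals. apply Dg. lra.
  - assert (g0 : g 0 = 0) by (unfold g; rewrite Rplus_0_r, ln_1, Rmult_0_r, exp_0; ring).
    (* g' has the sign of xi, hence of t *)
    assert (Hsign : 0 <= g' xi * (t - 0)).
    { unfold g'. destruct (Rle_dec 0 t) as [Ht0 | Ht0].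
      - rewrite Rmin_left, Rmax_right in Hxi by lra.
        assert (0 <= ln (1 + xi)) by (rewrite <- ln_1 at 1; apply ln_le; lra).
        assert (Hexp : exp ((y - 1) * ln (1 + xi)) <= exp 0) by (apply exp_le_compat; nra).
        rewrite exp_0 in Hexp.
        assert (0 <= y * (1 - exp ((y - 1) * ln (1 + xi)))) by (apply Rmult_le_pos; lra).
        apply Rmult_le_pos; lra.
      - rewrite Rmin_right, Rmax_left in Hxi by lra.
        assert (ln (1 + xi) <= 0) by (rewrite <- ln_1 at 1; apply ln_le; lra).
        assert (Hexp : exp 0 <= exp ((y - 1) * ln (1 + xi))) by (apply exp_le_compat; nra).
        rewrite exp_0 in Hexp.
        assert (y * (1 - exp ((y - 1) * ln (1 + xi))) <= 0)
          by (apply Rmult_le_0_l; lra).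
        nra. }
    rewrite g0 in Heq. unfold g in Heq. unfold Rpower. lra.
Qed.

Lemma Rpower_bernoulli_ge b t : 0 <= b <= 1 -> -1 < t -> 1 + b * t / (1 + t) <= Rpower (1 + t) b.
Proof.
  intros Hb Ht. set (s := - t / (1 + t)).
  assert (Es : 1 + s = / (1 + t)) by (unfold s; field; lra).
  assert (Hs : -1 < s) by (pose proof (Rinv_0_lt_compat (1 + t) ltac:(lra)); lra).
  pose proof (Rpower_bernoulli_le b s Hb Hs) as Hb1. rewrite Es, Rpower_inv_base in Hb1 by lra.
  set (P := Rpower (1 + t) b) in *. assert (HP : 0 < P) by apply Rpower_pos.
  set (X := b * t / (1 + t)).
  replace (b * s) with (- X) in Hb1 by (unfold X, s; field; lra).
  assert (HiP : 0 < / P) by (apply Rinv_0_lt_compat; lra).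
  assert (H1X : 0 < 1 - X) by lra.
  assert (/ (1 - X) <= P) by (replace P with (/ / P) by (field; lra); apply Rinv_le_contravar; lra).
  assert (1 + X <= / (1 - X))
    by (apply Rmult_le_reg_r with (1 - X); [lra|]; rewrite Rinv_l by lra; nra).
  lra.
Qed.

Lemma is_lim_seq_close (u : nat -> R) (l eps : R) : is_lim_seq u l -> 0 < eps ->
  exists N, forall n, (N <= n)%nat -> Rabs (u n - l) < eps.
Proof.
  intros Hl He. apply is_lim_seq_spec in Hl. destruct (Hl (mkposreal eps He)) as [N HN].
  exists N. exact HN.
Qed.

Lemma is_lim_seq_large (u : nat -> R) (A : R) : is_lim_seq u p_infty ->
  exists N, forall n, (N <= n)%nat -> A < u n.
Proof. intros Hl. apply is_lim_seq_spec in Hl. exact (Hl A). Qed.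

Lemma is_lim_seq_inv_INR : is_lim_seq (fun n => / INR n) 0.
Proof.
  replace (Finite 0) with (Rbar_inv p_infty) by reflexivity.
  apply is_lim_seq_inv; [apply is_lim_seq_INR | discriminate].
Qed.

Lemma is_lim_seq_Rpower_succ_pinfty g : 0 < g -> is_lim_seq (fun n => Rpower (INR n + 1) g) p_infty.
Proof.
  intros Hg. apply is_lim_seq_spec. intros A.
  set (T := exp (ln (Rabs A + 1) / g)).
  destruct (is_lim_seq_large INR T is_lim_seq_INR) as [N HN].
  exists N. intros n Hn. specialize (HN n Hn).
  assert (HT : 0 < T) by apply exp_pos.
  unfold Rpower. apply Rlt_le_trans with (Rabs A + 1); [pose proof (Rle_abs A); lra|].
  rewrite <- (exp_ln (Rabs A + 1)) at 1 by (pose proof (Rabs_pos A); lra).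
  apply exp_le_compat. assert (Hl : ln T < ln (INR n + 1)) by (apply ln_increasing; lra).
  unfold T in Hl. rewrite ln_exp in Hl.
  apply Rmult_le_reg_l with (/ g); [apply Rinv_0_lt_compat; lra|].
  replace (/ g * (g * ln (INR n + 1))) with (ln (INR n + 1)) by (field; lra).
  unfold Rdiv in Hl. rewrite Rmult_comm. lra.
Qed.

Lemma is_lim_seq_Rpower_succ_0 g : 0 < g -> is_lim_seq (fun n => Rpower (INR n + 1) (- g)) 0.
Proof.
  intros Hg. apply (is_lim_seq_ext (fun n => / Rpower (INR n + 1) g)).
  - intros n. rewrite Rpower_Ropp. reflexivity.
  - apply (is_lim_seq_inv _ p_infty (is_lim_seq_Rpower_succ_pinfty g Hg)). discriminate.
Qed.

(** * The renewal equation for the law of T° *)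

Definition rho (H : R) (n : nat) : R := Rpower (INR n) (2 * H - 2).

Lemma fold_right_Rplus_app l1 l2 :
  fold_right Rplus 0 (l1 ++ l2) = fold_right Rplus 0 l1 + fold_right Rplus 0 l2.
Proof. induction l1; simpl; [ring | rewrite IHl1; ring]. Qed.

Lemma fold_right_Rplus_scal (A : Type) (F : A -> R) k l :
  fold_right Rplus 0 (map (fun x => k * F x) l) = k * fold_right Rplus 0 (map F l).
Proof. induction l; simpl; [ring | rewrite IHl; ring]. Qed.

Section Renewal.

Variables H c : R.

(* [Dchain a l e] is D°_H({a, e}, l) whenever a < l < e. *)
Definition Dchain (a : nat) (l : list nat) (e : nat) : R :=
  fold_right Rplus 0
    (map (fun B' => (-1) ^ length B' * c ^ length B' * Lprod H a (B' ++ [e])) (sublists l)).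

Lemma Dchain_nil a e : Dchain a [] e = Rpower (gapR a e) (2 * H - 2).
Proof. unfold Dchain; simpl. ring. Qed.

Lemma Dchain_cons a x l e :
  Dchain a (x :: l) e = Dchain a l e - c * Rpower (gapR a x) (2 * H - 2) * Dchain x l e.
Proof.
  unfold Dchain; simpl sublists.
  rewrite map_app, fold_right_Rplus_app, map_map.
  rewrite (map_ext
     (fun B => (-1) ^ length (x :: B) * c ^ length (x :: B) * Lprod H a ((x :: B) ++ [e]))
     (fun B => - (c * Rpower (gapR a x) (2 * H - 2)) *
               ((-1) ^ length B * c ^ length B * Lprod H x (B ++ [e])))) by (intros; simpl; ring).
  rewrite fold_right_Rplus_scal. ring.
Qed.

(* Expanding along the first point of [seq r m] that is chosen in B'. *)
Lemma Dchain_seq m : forall r a e,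
  Dchain a (seq r m) e = Rpower (gapR a e) (2 * H - 2)
   - sum_lt (fun i => c * Rpower (gapR a (r + i)) (2 * H - 2) *
                      Dchain (r + i) (seq (S (r + i)) (m - 1 - i)) e) m.
Proof.
  induction m; intros r a e; [simpl; rewrite Dchain_nil; ring|].
  change (seq r (S m)) with (r :: seq (S r) m).
  rewrite Dchain_cons, IHm, sum_lt_Sl, Nat.add_0_r. replace (S m - 1 - 0)%nat with m by lia.
  rewrite (sum_lt_ext (fun i => c * Rpower (gapR a (r + S i)) (2 * H - 2) *
      Dchain (r + S i) (seq (S (r + S i)) (S m - 1 - S i)) e)
     (fun i => c * Rpower (gapR a (S r + i)) (2 * H - 2) *
      Dchain (S r + i) (seq (S (S r + i)) (m - 1 - i)) e)); [ring|].
  intros i Hi. replace (r + S i)%nat with (S r + i)%nat by lia.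
  replace (S m - 1 - S i)%nat with (m - 1 - i)%nat by lia. reflexivity.
Qed.

Definition Dgap (a m : nat) : R := Dchain a (seq (S a) m) (S a + m).

Lemma gapR_succ a k : gapR a (S a + k) = INR (S k).
Proof.
  unfold gapR. replace (Nat.leb a (S a + k)) with true by (symmetry; apply Nat.leb_le; lia).
  f_equal. lia.
Qed.

Lemma Dgap_rec m : forall a,
  Dgap a m = rho H (S m) - sum_lt (fun i => c * rho H (S i) * Dgap 0 (m - 1 - i)) m.
Proof.
  induction m as [m IH] using lt_wf_ind. intro a.
  unfold Dgap at 1. rewrite Dchain_seq, gapR_succ. unfold rho. f_equal.
  apply sum_lt_ext. intros i Hi. rewrite gapR_succ.
  replace (Dchain (S a + i) (seq (S (S a + i)) (m - 1 - i)) (S a + m))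
    with (Dgap (S a + i) (m - 1 - i)) by (unfold Dgap; f_equal; lia).
  rewrite (IH (m - 1 - i)%nat ltac:(lia) (S a + i)%nat), (IH (m - 1 - i)%nat ltac:(lia) 0%nat).
  reflexivity.
Qed.

End Renewal.

Fixpoint strictly_between (lo : nat) (l : list nat) (hi : nat) : Prop :=
  match l with
  | [] => (lo < hi)%nat
  | y :: l' => (lo < y)%nat /\ strictly_between y l' hi
  end.

Lemma strictly_between_lt l : forall lo hi, strictly_between lo l hi -> (lo < hi)%nat.
Proof.
  induction l; simpl; intros lo hi Hl; [lia|].
  destruct Hl as [H1 H2]. apply IHl in H2. lia.
Qed.

Lemma strictly_between_weaken l lo lo' hi :
  (lo' <= lo)%nat -> strictly_between lo l hi -> strictly_between lo' l hi.
Proof. destruct l; simpl; intros; [lia | split; [lia | tauto]]. Qed.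

Lemma strictly_between_sublists l : forall lo hi, strictly_between lo l hi ->
  forall B, In B (sublists l) -> strictly_between lo B hi.
Proof.
  induction l as [|y l IH]; simpl; intros lo hi Hl B HB.
  - destruct HB as [<- | []]. exact Hl.
  - destruct Hl as [H1 H2]. apply in_app_or in HB. destruct HB as [HB | HB].
    + apply (strictly_between_weaken _ y); [lia | eauto].
    + apply in_map_iff in HB. destruct HB as [B' [<- HB']]. simpl. eauto.
Qed.

Lemma strictly_between_seq m : forall r lo hi,
  (lo < r)%nat -> (r + m <= hi)%nat -> strictly_between lo (seq r m) hi.
Proof. induction m; simpl; intros; [lia | split; [lia | apply IHm; lia]]. Qed.

Lemma sort_nat_id l : forall lo hi, strictly_between lo l hi -> sort_nat l = l.
Proof.
  induction l as [|y l IH]; simpl; intros lo hi Hl; auto.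
  destruct Hl as [H1 H2]. rewrite (IH _ _ H2).
  destruct l as [|z l']; simpl; auto.
  destruct H2 as [H3 _].
  replace (Nat.leb y z) with true by (symmetry; apply Nat.leb_le; lia). reflexivity.
Qed.

Lemma insert_nat_last l : forall lo hi, strictly_between lo l hi -> insert_nat hi l = l ++ [hi].
Proof.
  induction l as [|y l IH]; simpl; intros lo hi Hl; auto.
  destruct Hl as [H1 H2]. pose proof (strictly_between_lt _ _ _ H2).
  replace (Nat.leb hi y) with false by (symmetry; apply Nat.leb_gt; lia).
  rewrite (IH _ _ H2). reflexivity.
Qed.

Lemma insert_nat_first l lo hi :
  strictly_between lo l hi -> insert_nat lo (l ++ [hi]) = lo :: l ++ [hi].
Proof.
  destruct l as [|y l]; simpl; intros Hl.
  - replace (Nat.leb lo hi) with true by (symmetry; apply Nat.leb_le; lia). reflexivity.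
  - destruct Hl as [H1 _].
    replace (Nat.leb lo y) with true by (symmetry; apply Nat.leb_le; lia). reflexivity.
Qed.

Lemma pT_succ H c m : pT H c (S m) = c * Dgap H c 0 m.
Proof.
  destruct m as [|k].
  - simpl. unfold Dgap. rewrite Dchain_nil. unfold Lcirc. simpl. unfold gapR; simpl. ring.
  - unfold pT. f_equal.
    (* the recursion [Dgap_rec] shows that [Dgap] does not depend on its base point *)
    rewrite (Dgap_rec H c (S k) 0), <- (Dgap_rec H c (S k) 1).
    unfold Dgap, Dcirc, Dchain. f_equal. apply map_ext_in. intros B HB.
    assert (HP : strictly_between 1 B (S (S (S k)))).
    { eapply strictly_between_sublists; [|exact HB]. apply strictly_between_seq; lia. }
    f_equal. unfold Lcirc. simpl app.
    change (sort_nat (1%nat :: S (S (S k)) :: B))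
      with (insert_nat 1 (insert_nat (S (S (S k))) (sort_nat B))).
    rewrite (sort_nat_id _ _ _ HP), (insert_nat_last _ _ _ HP), (insert_nat_first _ _ _ HP).
    reflexivity.
Qed.

(* u_n = P(X*_n = 1) for the GBP-II* process. *)
Definition renewal_u (H c : R) (n : nat) : R :=
  match n with O => 1 | S _ => c * rho H n end.

Lemma renewal_u_eq H c m :
  renewal_u H c (S m) = sum_lt (fun i => renewal_u H c i * pT H c (S m - i)%nat) (S m).
Proof.
  rewrite sum_lt_Sl, Nat.sub_0_r, pT_succ, Dgap_rec.
  rewrite (sum_lt_ext (fun i => renewal_u H c (S i) * pT H c (S m - S i)%nat)
     (fun i => c * (c * rho H (S i) * Dgap H c 0 (m - 1 - i)))).
  - rewrite sum_lt_scal. simpl. ring.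
  - intros i Hi. simpl renewal_u. replace (S m - S i)%nat with (S (m - 1 - i)) by lia.
    rewrite pT_succ. ring.
Qed.

(** * Kaluza's theorem and nonnegativity of the law *)

(* Subtracting r times the renewal equation at [n] from the one
   at [n+1], with r = u_(n+2)/u_(n+1), writes f_(n+2) as a combination of
   f_1..f_(n+1) whose coefficients r u_i - u_(i+1) are nonnegative by log-convexity. *)
Lemma kaluza_nonneg (u f : nat -> R) :
  u 0%nat = 1 -> (forall n, 0 < u n) ->
  (forall j, u (S j) / u j <= u (S (S j)) / u (S j)) ->
  (forall m, u (S m) = sum_lt (fun i => u i * f (S m - i)%nat) (S m)) ->
  forall n, (1 <= n)%nat -> 0 <= f n.
Proof.
  intros u0 upos ratio_incr ren.
  assert (ratio_le : forall i n, (i <= n)%nat -> u (S i) / u i <= u (S n) / u n).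
  { intros i n Hin. induction Hin; [lra|]. eapply Rle_trans; [apply IHHin | apply ratio_incr]. }
  intro n. induction n as [n IH] using lt_wf_ind. intros Hn.
  destruct n as [|[|n]]; [lia| |].
  - pose proof (ren 0%nat) as R0. simpl in R0. rewrite u0 in R0. pose proof (upos 1%nat). lra.
  - pose proof (ren (S n)) as R1. pose proof (ren n) as R2.
    rewrite sum_lt_Sl, u0, Nat.sub_0_r in R1.
    set (r := u (S (S n)) / u (S n)).
    assert (E : f (S (S n)) = sum_lt (fun i => (r * u i - u (S i)) * f (S n - i)%nat) (S n)).
    { rewrite (sum_lt_ext _
         (fun i => r * (u i * f (S n - i)%nat) - u (S i) * f (S (S n) - S i)%nat))
        by (intros i Hi; replace (S (S n) - S i)%nat with (S n - i)%nat by lia; ring).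
      rewrite sum_lt_minus, sum_lt_scal, <- R2.
      unfold r. field_simplify; [|pose proof (upos (S n)); lra]. lra. }
    rewrite E. apply sum_lt_nonneg. intros i Hi. apply Rmult_le_pos; [|apply IH; lia].
    assert (u (S i) / u i <= r) by (apply ratio_le; lia).
    pose proof (upos i). apply Rmult_le_reg_r with (/ u i); [apply Rinv_0_lt_compat; lra|].
    rewrite Rmult_0_l. replace ((r * u i - u (S i)) * / u i) with (r - u (S i) / u i) by (field; lra).
    lra.
Qed.

Lemma Rpower_ratio_le x p : 1 <= x -> p <= 0 ->
  Rpower (x + 1) p / Rpower x p <= Rpower (x + 2) p / Rpower (x + 1) p.
Proof.
  intros Hx Hp. unfold Rpower. unfold Rdiv. rewrite <- !exp_Ropp, <- !exp_plus.
  assert (Hln : ln x + ln (x + 2) <= 2 * ln (x + 1)).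
  { rewrite <- ln_mult by lra. replace (2 * ln (x + 1)) with (ln (x + 1) + ln (x + 1)) by ring.
    rewrite <- ln_mult by lra. apply ln_le; nra. }
  apply exp_le_compat. nra.
Qed.

Lemma renewal_u_pos H c n : 0 < c -> 0 < renewal_u H c n.
Proof.
  intros Hc. destruct n; simpl; [lra|]. apply Rmult_lt_0_compat; [lra | apply Rpower_pos].
Qed.

(* At j = 0 this is the hypothesis c <= 2^(2H-2); for j >= 1 it is the
   log-convexity of n^(2H-2). *)
Lemma renewal_u_ratio_incr H c j : H <= 1 -> 0 < c <= Rpower 2 (2 * H - 2) ->
  renewal_u H c (S j) / renewal_u H c j <=
  renewal_u H c (S (S j)) / renewal_u H c (S j).
Proof.
  intros hH hc. unfold renewal_u, rho.
  assert (Hw : forall k, 0 < Rpower (INR k) (2 * H - 2)) by (intro; apply Rpower_pos).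
  destruct j as [|j].
  - replace (INR 1) with 1 by reflexivity. replace (INR 2) with 2 by reflexivity.
    rewrite Rpower_1_base.
    replace (c * Rpower 2 (2 * H - 2) / (c * 1)) with (Rpower 2 (2 * H - 2)) by (field; lra).
    lra.
  - pose proof (Hw (S j)). pose proof (Hw (S (S j))). pose proof (Hw (S (S (S j)))).
    replace (c * Rpower (INR (S (S j))) (2 * H - 2) / (c * Rpower (INR (S j)) (2 * H - 2)))
      with (Rpower (INR (S (S j))) (2 * H - 2) / Rpower (INR (S j)) (2 * H - 2)) by (field; lra).
    replace (c * Rpower (INR (S (S (S j)))) (2 * H - 2) / (c * Rpower (INR (S (S j))) (2 * H - 2)))
      with (Rpower (INR (S (S (S j)))) (2 * H - 2) / Rpower (INR (S (S j))) (2 * H - 2))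
      by (field; lra).
    rewrite !S_INR. replace (INR j + 1 + 1 + 1) with ((INR j + 1) + 2) by ring.
    apply Rpower_ratio_le; [pose proof (pos_INR j); lra | lra].
Qed.

Lemma pT_nonneg H c n : H <= 1 -> 0 < c <= Rpower 2 (2 * H - 2) -> 0 <= pT H c n.
Proof.
  intros hH hc. destruct n as [|n]; [simpl; lra|].
  apply (kaluza_nonneg (renewal_u H c)); try reflexivity; try lia.
  - intros k. apply renewal_u_pos. lra.
  - intros j. apply renewal_u_ratio_incr; assumption.
  - apply renewal_u_eq.
Qed.

(** * Convolutions *)

Definition conv (x y : nat -> R) (n : nat) : R := sum_lt (fun k => x k * y (n - k)%nat) (S n).
Definition psum (x : nat -> R) (n : nat) : R := sum_lt x (S n).

Lemma conv_comm x y n : conv x y n = conv y x n.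
Proof.
  unfold conv. rewrite sum_lt_rev. apply sum_lt_ext. intros k Hk.
  replace (S n - 1 - k)%nat with (n - k)%nat by lia. replace (n - (n - k))%nat with k by lia. ring.
Qed.

Lemma conv_ext_l x x' y n : (forall k, (k <= n)%nat -> x k = x' k) -> conv x y n = conv x' y n.
Proof. intros Hx. unfold conv. apply sum_lt_ext. intros k Hk. rewrite Hx by lia. reflexivity. Qed.

Lemma conv_ext_r x y y' n : (forall k, (k <= n)%nat -> y k = y' k) -> conv x y n = conv x y' n.
Proof. intros Hy. unfold conv. apply sum_lt_ext. intros k Hk. rewrite Hy by lia. reflexivity. Qed.

Lemma conv_psum_r y x n : conv y (psum x) n = psum (conv y x) n.
Proof.
  induction n; [unfold conv, psum; simpl; ring|].
  unfold psum in *. rewrite sum_lt_S, <- IHn. unfold conv.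
  rewrite !(sum_lt_S _ (S n)).
  rewrite (sum_lt_ext (fun k => y k * sum_lt x (S (S n - k)))
     (fun k => y k * sum_lt x (S (n - k)) + y k * x (S n - k)%nat)).
  - rewrite sum_lt_plus. replace (S n - S n)%nat with 0%nat by lia. simpl. ring.
  - intros k Hk. replace (S n - k)%nat with (S (n - k)) by lia. rewrite (sum_lt_S _ (S (n - k))).
    ring.
Qed.

Lemma conv_assoc x y z n : conv (conv x y) z n = conv x (conv y z) n.
Proof.
  unfold conv at 1.
  rewrite (sum_lt_ext (fun k => conv x y k * z (n - k)%nat)
     (fun m => sum_lt (fun k => x k * y (m - k)%nat * z (n - m)%nat) (S m))).
  2:{ intros m Hm. unfold conv. rewrite Rmult_comm, <- sum_lt_scal.
      apply sum_lt_ext. intros; ring. }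
  rewrite sum_lt_exchange_triangle. unfold conv. apply sum_lt_ext. intros k Hk.
  rewrite <- sum_lt_scal. apply sum_lt_ext. intros j Hj.
  replace (k + j - k)%nat with j by lia. replace (n - (k + j))%nat with (n - k - j)%nat by lia.
  ring.
Qed.

Lemma conv_one_r x n : conv x (fun _ => 1) n = psum x n.
Proof. unfold conv, psum. apply sum_lt_ext. intros; ring. Qed.

Lemma renewal_tail_conv (u f : nat -> R) n :
  u 0%nat = 1 -> f 0%nat = 0 ->
  (forall m, u (S m) = sum_lt (fun i => u i * f (S m - i)%nat) (S m)) ->
  conv (fun k => 1 - psum f k) u n = 1.
Proof.
  intros u0 f0 ren.
  assert (Huf : forall m, conv u f m = u m - (if Nat.eqb m 0 then 1 else 0)).
  { intros [|m]; unfold conv; [simpl; rewrite u0, f0; ring|].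
    rewrite sum_lt_S, <- ren, Nat.sub_diag, f0. simpl. ring. }
  rewrite conv_comm. unfold conv.
  rewrite (sum_lt_ext _ (fun k => u k * 1 - u k * psum f (n - k)%nat)) by (intros; ring).
  rewrite sum_lt_minus. fold (conv u (psum f) n). rewrite conv_psum_r. unfold psum.
  rewrite (sum_lt_ext (conv u f) _ (S n) (fun m _ => Huf m)).
  rewrite sum_lt_minus, (sum_lt_Sl (fun m => if Nat.eqb m 0 then 1 else 0)).
  rewrite (sum_lt_ext (fun i => if Nat.eqb (S i) 0 then 1 else 0) (fun _ => 0)) by reflexivity.
  rewrite sum_lt_zero, (sum_lt_ext (fun k => u k * 1) u) by (intros; ring).
  simpl. ring.
Qed.

Lemma conv_inverse_conv q u b n :
  (forall m, conv q u m = 1) -> conv q (conv b u) n = psum b n.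
Proof.
  intros Hqu.
  rewrite (conv_ext_r _ _ (conv u b)) by (intros; apply conv_comm).
  rewrite <- conv_assoc, (conv_ext_l _ (fun _ => 1)) by (intros; apply Hqu).
  rewrite conv_comm. apply conv_one_r.
Qed.

(** * Coefficients of (1 - z)^(-x) *)

(* [bcoef x n] = x (x+1) ... (x+n-1) / n! is the coefficient of z^n in (1 - z)^(-x);
   it behaves like n^(x-1) / Gamma(x). *)
Fixpoint bcoef (x : R) (n : nat) : R :=
  match n with O => 1 | S n' => bcoef x n' * (INR n' + x) / (INR n' + 1) end.

Lemma bcoef_succ_mul x n : (INR n + 1) * bcoef x (S n) = (INR n + x) * bcoef x n.
Proof. simpl. field. pose proof (INR_succ_pos n); lra. Qed.

Lemma bcoef_pos x n : 0 < x -> 0 < bcoef x n.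
Proof.
  intros Hx; induction n; simpl; [lra|]. pose proof (INR_succ_pos n). pose proof (pos_INR n).
  apply Rdiv_lt_0_compat; [apply Rmult_lt_0_compat|]; lra.
Qed.

Lemma bcoef_le_1 x n : 0 < x <= 1 -> bcoef x n <= 1.
Proof.
  intros Hx; induction n; simpl; [lra|]. pose proof (bcoef_pos x n ltac:(lra)).
  pose proof (INR_succ_pos n).
  apply Rmult_le_reg_r with (INR n + 1); [lra|]. unfold Rdiv.
  rewrite Rmult_assoc, Rinv_l by lra. nra.
Qed.

Lemma conv_bcoef_succ x y n :
  (INR n + 1) * conv (bcoef x) (bcoef y) (S n) = (INR n + x + y) * conv (bcoef x) (bcoef y) n.
Proof.
  unfold conv. rewrite <- !sum_lt_scal.
  rewrite (sum_lt_ext (fun k => (INR n + 1) * (bcoef x k * bcoef y (S n - k)%nat))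
    (fun k => INR k * bcoef x k * bcoef y (S n - k)%nat +
              bcoef x k * (INR (S n - k) * bcoef y (S n - k)%nat))).
  2:{ intros k Hk. assert (E : INR k + INR (S n - k) = INR n + 1)
        by (rewrite <- plus_INR, <- S_INR; f_equal; lia).
      rewrite <- E. ring. }
  rewrite sum_lt_plus, sum_lt_Sl, (sum_lt_S _ (S n)).
  rewrite (sum_lt_ext (fun i => INR (S i) * bcoef x (S i) * bcoef y (S n - S i)%nat)
    (fun i => (INR i + x) * bcoef x i * bcoef y (n - i)%nat)).
  2:{ intros i Hi. rewrite S_INR, bcoef_succ_mul. replace (S n - S i)%nat with (n - i)%nat by lia.
      ring. }
  rewrite (sum_lt_ext (fun k => bcoef x k * (INR (S n - k) * bcoef y (S n - k)%nat))
    (fun k => bcoef x k * ((INR (n - k) + y) * bcoef y (n - k)%nat))).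
  2:{ intros k Hk. replace (S n - k)%nat with (S (n - k)) by lia. rewrite S_INR, bcoef_succ_mul.
      reflexivity. }
  rewrite Nat.sub_diag.
  rewrite <- (sum_lt_ext
    (fun i => (INR i + x) * bcoef x i * bcoef y (n - i)%nat +
              bcoef x i * ((INR (n - i) + y) * bcoef y (n - i)%nat))
    (fun k => (INR n + x + y) * (bcoef x k * bcoef y (n - k)%nat))).
  - rewrite sum_lt_plus. simpl INR. ring.
  - intros k Hk. assert (E : INR k + INR (n - k) = INR n) by (rewrite <- plus_INR; f_equal; lia).
    rewrite <- E. ring.
Qed.

(* (1 - z)^(-x) (1 - z)^(-y) = (1 - z)^(-1) when x + y = 1 *)
Lemma conv_bcoef_compl x y n : x + y = 1 -> conv (bcoef x) (bcoef y) n = 1.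
Proof.
  intros Hxy. induction n; [unfold conv; simpl; ring|].
  pose proof (conv_bcoef_succ x y n) as E. rewrite IHn in E. pose proof (INR_succ_pos n).
  apply Rmult_eq_reg_l with (INR n + 1); [rewrite E; lra | lra].
Qed.

Lemma psum_bcoef x n : 0 < x -> psum (bcoef x) n = bcoef x n * (INR n + x) / x.
Proof.
  intros Hx. induction n; unfold psum in *; [simpl; field; lra|].
  rewrite sum_lt_S, IHn.
  assert (E : bcoef x n * (INR n + x) = (INR n + 1) * bcoef x (S n))
    by (rewrite bcoef_succ_mul; ring).
  unfold Rdiv. rewrite E, S_INR. field. lra.
Qed.

Lemma bcoef_le_Rpower x n : 0 < x < 1 -> bcoef x n <= Rpower (INR n + 1) (x - 1).
Proof.
  intros Hx. induction n; [simpl; rewrite Rplus_0_l, Rpower_1_base; lra|].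
  pose proof (INR_succ_pos n) as Hn. pose proof (pos_INR n).
  set (t := / (INR n + 1)). assert (Ht : 0 < t) by (apply Rinv_0_lt_compat; lra).
  rewrite (Rpower_split (INR n + 1)) by (try rewrite S_INR; lra).
  replace ((INR (S n) + 1) / (INR n + 1)) with (1 + t) by (unfold t; rewrite S_INR; field; lra).
  replace (x - 1) with (- (1 - x)) in * by ring. rewrite (Rpower_Ropp (1 + t)).
  pose proof (Rpower_bernoulli_le (1 - x) t ltac:(lra) ltac:(lra)) as Hb.
  pose proof (Rpower_pos (1 + t) (1 - x)) as Hp.
  (* the ratio (n + x)/(n + 1) of consecutive coefficients is at most (1 + t)^(x - 1) *)
  assert (Hratio : (INR n + x) / (INR n + 1) <= / Rpower (1 + t) (1 - x)).
  { apply Rmult_le_reg_r with (Rpower (1 + t) (1 - x)); [lra|].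
    rewrite Rinv_l by lra.
    apply Rle_trans with ((INR n + x) / (INR n + 1) * (1 + (1 - x) * t)).
    - apply Rmult_le_compat_l; [apply Rdiv_le_0_compat; lra | lra].
    - unfold t. apply Rmult_le_reg_r with ((INR n + 1) * (INR n + 1)); [nra|].
      field_simplify; [nra | lra]. }
  change (bcoef x (S n)) with (bcoef x n * (INR n + x) / (INR n + 1)).
  unfold Rdiv. rewrite Rmult_assoc.
  apply Rmult_le_compat; try assumption.
  - pose proof (bcoef_pos x n ltac:(lra)). lra.
  - apply Rmult_le_pos; [lra | left; apply Rinv_0_lt_compat; lra].
Qed.

Lemma is_lim_seq_bcoef_0 x : 0 < x < 1 -> is_lim_seq (bcoef x) 0.
Proof.
  intros Hx.
  apply (is_lim_seq_le_le (fun _ => 0) _ (fun n => Rpower (INR n + 1) (- (1 - x)))).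
  - intros n. split; [left; apply bcoef_pos; lra|].
    replace (- (1 - x)) with (x - 1) by ring. apply bcoef_le_Rpower; auto.
  - apply is_lim_seq_const.
  - apply is_lim_seq_Rpower_succ_0. lra.
Qed.

Definition bcoef_scaled (x : R) (n : nat) : R := bcoef x (S n) * Rpower (INR (S n)) (1 - x).

Lemma bcoef_scaled_0 x : 0 < x -> bcoef_scaled x 0 = x.
Proof. intros. unfold bcoef_scaled. simpl. rewrite Rplus_0_l, Rpower_1_base. field. Qed.

Lemma bcoef_scaled_incr x n : 0 < x < 1 -> bcoef_scaled x n <= bcoef_scaled x (S n).
Proof.
  intros Hx. unfold bcoef_scaled. set (m := INR (S n)).
  assert (Hm : 1 <= m) by (unfold m; rewrite S_INR; pose proof (pos_INR n); lra).
  assert (Him : 0 < / m) by (apply Rinv_0_lt_compat; lra).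
  change (bcoef x (S (S n))) with (bcoef x (S n) * (m + x) / (m + 1)).
  replace (INR (S (S n))) with (m + 1) by (unfold m; rewrite (S_INR (S n)); ring).
  rewrite (Rpower_split m (m + 1)) by lra.
  replace ((m + 1) / m) with (1 + / m) by (field; lra).
  assert (E : Rpower (1 + / m) (1 - x) = (1 + / m) / Rpower (1 + / m) x)
    by (rewrite Rpower_1_minus by lra; reflexivity).
  rewrite E.
  pose proof (Rpower_bernoulli_le x (/ m) ltac:(lra) ltac:(lra)) as Hb.
  pose proof (Rpower_pos (1 + / m) x). pose proof (Rpower_pos m (1 - x)).
  pose proof (bcoef_pos x (S n) ltac:(lra)).
  (* Bernoulli makes the factor gained from n to n+1 at least 1 *)
  assert (Hgain : 1 <= (m + x) / (m + 1) * ((1 + / m) / Rpower (1 + / m) x)).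
  { assert (0 < x * / m) by (apply Rmult_lt_0_compat; lra).
    apply Rle_trans with ((m + x) / (m + 1) * ((1 + / m) / (1 + x * / m))).
    - right. field. lra.
    - apply Rmult_le_compat_l; [apply Rdiv_le_0_compat; lra|]. unfold Rdiv.
      apply Rmult_le_compat_l; [lra | apply Rinv_le_contravar; lra]. }
  replace (bcoef x (S n) * (m + x) / (m + 1) * (Rpower m (1 - x) * ((1 + / m) / Rpower (1 + / m) x)))
    with ((bcoef x (S n) * Rpower m (1 - x)) * ((m + x) / (m + 1) * ((1 + / m) / Rpower (1 + / m) x)))
    by (field; lra).
  rewrite <- (Rmult_1_r (bcoef x (S n) * Rpower m (1 - x))) at 1.
  apply Rmult_le_compat_l; [nra | lra].
Qed.

Lemma bcoef_scaled_ge x n : 0 < x < 1 -> x <= bcoef_scaled x n.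
Proof.
  intros Hx. induction n; [rewrite bcoef_scaled_0; lra|].
  pose proof (bcoef_scaled_incr x n Hx). lra.
Qed.

Lemma bcoef_scaled_le_1 x n : 0 < x < 1 -> bcoef_scaled x n <= 1.
Proof.
  intros Hx. unfold bcoef_scaled. pose proof (bcoef_le_Rpower x (S n) Hx) as Hle.
  replace (x - 1) with (- (1 - x)) in Hle by ring. rewrite Rpower_Ropp in Hle.
  assert (Rpower (INR (S n)) (1 - x) <= Rpower (INR (S n) + 1) (1 - x))
    by (apply Rle_Rpower_l; [lra | rewrite S_INR; pose proof (pos_INR n); lra]).
  pose proof (Rpower_pos (INR (S n)) (1 - x)). pose proof (Rpower_pos (INR (S n) + 1) (1 - x)).
  apply Rle_trans with (/ Rpower (INR (S n) + 1) (1 - x) * Rpower (INR (S n)) (1 - x)).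
  - apply Rmult_le_compat_r; lra.
  - apply Rmult_le_reg_l with (Rpower (INR (S n) + 1) (1 - x)); [lra|].
    rewrite <- Rmult_assoc, Rinv_r by lra. lra.
Qed.

Lemma bcoef_scaled_lim x : 0 < x < 1 -> exists L, x <= L <= 1 /\ is_lim_seq (bcoef_scaled x) L.
Proof.
  intros Hx.
  assert (Hg : Un_growing (bcoef_scaled x)) by (intro n; apply bcoef_scaled_incr; auto).
  assert (Hb : has_ub (bcoef_scaled x))
    by (exists 1; intros y [n ->]; apply bcoef_scaled_le_1; auto).
  destruct (growing_cv _ Hg Hb) as [L HL].
  pose proof (growing_ineq _ _ Hg HL) as Hle. apply is_lim_seq_Reals in HL.
  exists L. split; [split|exact HL].
  - rewrite <- (bcoef_scaled_0 x) by lra. apply Hle.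
  - apply (is_lim_seq_le (bcoef_scaled x) (fun _ => 1) L 1); auto.
    + intros; apply bcoef_scaled_le_1; auto.
    + apply is_lim_seq_const.
Qed.

Lemma psum_bcoef_scaled b n : 0 < b < 1 ->
  psum (bcoef b) (S n) / Rpower (INR (S n)) b = bcoef_scaled b n * (1 + b * / INR (S n)) / b.
Proof.
  intros Hb. rewrite psum_bcoef by lra. unfold bcoef_scaled.
  assert (HS : 0 < INR (S n)) by (rewrite S_INR; pose proof (pos_INR n); lra).
  rewrite Rpower_1_minus by auto. pose proof (Rpower_pos (INR (S n)) b).
  field. lra.
Qed.

(** * Toeplitz limits *)

Lemma toeplitz_to_0 (w : nat -> nat -> R) (e : nat -> R) (E : R) :
  (forall n k, 0 <= w n k) -> (forall n, sum_lt (w n) (S n) <= 1) ->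
  (forall M eps, 0 < eps -> exists N, forall n k,
     (N <= n)%nat -> (k <= n)%nat -> (n - k < M)%nat -> w n k < eps) ->
  (forall i, Rabs (e i) <= E) -> is_lim_seq e 0 ->
  is_lim_seq (fun n => sum_lt (fun k => w n k * e (n - k)%nat) (S n)) 0.
Proof.
  intros Hw Hmass Hlast HE He. apply is_lim_seq_spec. intros [eps Heps]. cbn [pos].
  assert (HE0 : 0 <= E) by (pose proof (HE 0%nat); pose proof (Rabs_pos (e 0%nat)); lra).
  destruct (is_lim_seq_close e 0 (eps / 2) He ltac:(lra)) as [M HM].
  set (d := eps / (2 * (INR M + 1) * (E + 1))).
  assert (Hd : 0 < d)
    by (unfold d; pose proof (pos_INR M); apply Rdiv_lt_0_compat; [lra | nra]).
  destruct (Hlast M d Hd) as [N HN]. exists N. intros n Hn. rewrite Rminus_0_r.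
  eapply Rle_lt_trans; [apply sum_lt_abs|].
  apply Rle_lt_trans with
    (sum_lt (fun k => eps / 2 * w n k + (if Nat.ltb (n - k) M then d * E else 0)) (S n)).
  - apply sum_lt_le. intros k Hk. rewrite Rabs_mult, (Rabs_pos_eq (w n k)) by apply Hw.
    pose proof (Hw n k). pose proof (HE (n - k)%nat). pose proof (Rabs_pos (e (n - k)%nat)).
    destruct (Nat.ltb (n - k) M) eqn:EM.
    + apply Nat.ltb_lt in EM. pose proof (HN n k Hn ltac:(lia) EM).
      assert (w n k * Rabs (e (n - k)%nat) <= d * E) by (apply Rmult_le_compat; lra).
      nra.
    + apply Nat.ltb_ge in EM. specialize (HM (n - k)%nat EM). rewrite Rminus_0_r in HM.
      assert (w n k * Rabs (e (n - k)%nat) <= w n k * (eps / 2)) by (apply Rmult_le_compat_l; lra).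
      lra.
  - rewrite sum_lt_plus, sum_lt_scal,
      (sum_lt_rev (fun k => if Nat.ltb (n - k) M then d * E else 0)).
    rewrite (sum_lt_ext (fun k => if Nat.ltb (n - (S n - 1 - k)) M then d * E else 0)
      (fun k => if Nat.ltb k M then d * E else 0))
      by (intros k Hk; replace (n - (S n - 1 - k))%nat with k by lia; reflexivity).
    pose proof (sum_lt_indicator_le M (d * E) (S n) ltac:(nra)).
    pose proof (Hmass n). pose proof (pos_INR M).
    assert (INR M * (d * E) < eps / 2).
    { replace (INR M * (d * E)) with (eps / 2 * (INR M / (INR M + 1)) * (E / (E + 1)))
        by (unfold d; field; lra).
      assert (INR M / (INR M + 1) < 1) by (apply Rlt_div_l; lra).
      assert (E / (E + 1) < 1) by (apply Rlt_div_l; lra).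
      assert (0 <= INR M / (INR M + 1)) by (apply Rdiv_le_0_compat; lra).
      assert (0 <= E / (E + 1)) by (apply Rdiv_le_0_compat; lra).
      assert (INR M / (INR M + 1) * (E / (E + 1)) < 1) by nra. nra. }
    nra.
Qed.

Lemma conv_weighted_to_0 (b a e : nat -> R) E :
  (forall i, 0 <= b i) -> is_lim_seq b 0 -> (forall i, 0 <= a i <= 1) ->
  (forall j, conv b a j = 1) -> (forall i, Rabs (e i) <= E) -> is_lim_seq e 0 ->
  is_lim_seq (conv b (fun i => a i * e i)) 0.
Proof.
  intros Hb Hbl Ha Hc HE He.
  apply (is_lim_seq_ext (fun n => sum_lt (fun k => b k * a (n - k)%nat * e (n - k)%nat) (S n))).
  { intros n. unfold conv. apply sum_lt_ext. intros; ring. }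
  apply (toeplitz_to_0 (fun n k => b k * a (n - k)%nat) e E); auto.
  - intros n k. pose proof (Hb k). pose proof (Ha (n - k)%nat). nra.
  - intros n. right. apply (Hc n).
  - intros M eps Heps. destruct (is_lim_seq_close b 0 eps Hbl Heps) as [N0 HN0].
    exists (N0 + M)%nat. intros n k Hn Hk Hnk.
    specialize (HN0 k ltac:(lia)). rewrite Rminus_0_r, Rabs_pos_eq in HN0 by apply Hb.
    pose proof (Hb k). pose proof (Ha (n - k)%nat).
    apply Rle_lt_trans with (b k); [|exact HN0]. nra.
Qed.

Lemma conv_div_psum_lim (q v : nat -> R) C E :
  (forall k, 0 <= q k <= 1) -> (forall j, Rabs (v j - C) <= E) -> is_lim_seq v C ->
  is_lim_seq (psum q) p_infty -> (forall n, 0 < psum q n) ->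
  is_lim_seq (fun n => conv q v n / psum q n) C.
Proof.
  intros Hq HE Hv HQ HQp.
  apply (is_lim_seq_ext
    (fun n => sum_lt (fun k => q k / psum q n * (v (n - k)%nat - C)) (S n) + C)).
  { intros n. pose proof (HQp n).
    rewrite (sum_lt_ext _ (fun k => / psum q n * (q k * v (n - k)%nat) - C / psum q n * q k))
      by (intros; field; lra).
    rewrite sum_lt_minus, !sum_lt_scal. fold (psum q n). unfold conv. field. lra. }
  replace (Finite C) with (Rbar_plus 0 C) by (simpl; f_equal; ring).
  apply is_lim_seq_plus'; [|apply is_lim_seq_const].
  apply (toeplitz_to_0 (fun n k => q k / psum q n) (fun j => v j - C) E); auto.
  - intros n k. apply Rdiv_le_0_compat; [apply Hq | apply HQp].
  - intros n. right. pose proof (HQp n).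
    rewrite (sum_lt_ext _ (fun k => / psum q n * q k)) by (intros; unfold Rdiv; ring).
    rewrite sum_lt_scal. fold (psum q n). field. lra.
  - intros M eps Heps. destruct (is_lim_seq_large (psum q) (/ eps) HQ) as [N HN].
    exists N. intros n k Hn _ _. specialize (HN n Hn). pose proof (HQp n). pose proof (Hq k).
    apply Rle_lt_trans with (/ psum q n).
    + unfold Rdiv. rewrite <- (Rmult_1_l (/ psum q n)) at 2.
      apply Rmult_le_compat_r; [left; apply Rinv_0_lt_compat|]; lra.
    + rewrite <- (Rinv_inv eps). apply Rinv_lt_contravar; [apply Rmult_lt_0_compat|]; try lra.
      apply Rinv_0_lt_compat; lra.
  - replace (Finite 0) with (Rbar_minus C C) by (simpl; f_equal; ring).
    apply is_lim_seq_minus'; [exact Hv | apply is_lim_seq_const].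
Qed.

(** * The monotone density theorem *)

Definition psum_norm (q : nat -> R) (b : R) (n : nat) : R := psum q n / Rpower (INR n) b.

Section MonotoneDensity.

Variable q : nat -> R.
Hypothesis q_decr : forall k, q (S k) <= q k.

Lemma q_le_shift n j : q (n + j)%nat <= q n.
Proof.
  induction j; [rewrite Nat.add_0_r; lra|].
  replace (n + S j)%nat with (S (n + j)) by lia. pose proof (q_decr (n + j)). lra.
Qed.

Lemma psum_diff_le n d : psum q (n + d) - psum q n <= INR d * q n.
Proof.
  induction d; [rewrite Nat.add_0_r; simpl; lra|].
  replace (n + S d)%nat with (S (n + d)) by lia. unfold psum in *.
  rewrite sum_lt_S, S_INR. pose proof (q_le_shift n (S d)) as Hle.
  replace (n + S d)%nat with (S (n + d)) in Hle by lia. lra.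
Qed.

Lemma psum_diff_ge n d : (d <= n)%nat -> INR d * q n <= psum q n - psum q (n - d).
Proof.
  revert n. induction d; intros n Hdn; [rewrite Nat.sub_0_r; simpl; lra|].
  destruct n as [|n]; [lia|]. replace (S n - S d)%nat with (n - d)%nat by lia.
  specialize (IHd n ltac:(lia)). unfold psum in *.
  rewrite sum_lt_S, S_INR. pose proof (q_decr n). pose proof (pos_INR d).
  assert (INR d * q (S n) <= INR d * q n) by (apply Rmult_le_compat_l; lra). lra.
Qed.

Variable b : R.

(* difference quotients of psum_norm over [n, n + d] and [n - d, n] bracket q_n n^(1-b) *)
Lemma scaled_term_ge n d : (1 <= d)%nat -> (1 <= n)%nat ->
  (psum_norm q b (n + d) * Rpower (1 + INR d / INR n) b - psum_norm q b n) * (INR n / INR d)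
    <= q n * Rpower (INR n) (1 - b).
Proof.
  intros Hd Hn. unfold psum_norm. pose proof (psum_diff_le n d) as Hup.
  assert (Hn0 : 0 < INR n) by (apply lt_0_INR; lia).
  assert (Hd0 : 0 < INR d) by (apply lt_0_INR; lia).
  rewrite (Rpower_split (INR n) (INR (n + d))) by (try rewrite plus_INR; lra).
  replace (INR (n + d) / INR n) with (1 + INR d / INR n) by (rewrite plus_INR; field; lra).
  rewrite Rpower_1_minus by auto.
  pose proof (Rpower_pos (INR n) b). pose proof (Rpower_pos (1 + INR d / INR n) b).
  replace ((psum q (n + d) / (Rpower (INR n) b * Rpower (1 + INR d / INR n) b) *
            Rpower (1 + INR d / INR n) b - psum q n / Rpower (INR n) b) * (INR n / INR d))
    with ((psum q (n + d) - psum q n) / INR d * (INR n / Rpower (INR n) b)) by (field; lra).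
  apply Rmult_le_compat_r; [apply Rdiv_le_0_compat; lra|].
  apply Rmult_le_reg_r with (INR d); [lra|]. unfold Rdiv.
  rewrite Rmult_assoc, Rinv_l by lra. lra.
Qed.

Lemma scaled_term_le n d : (1 <= d)%nat -> (d < n)%nat ->
  q n * Rpower (INR n) (1 - b) <=
  (psum_norm q b n - psum_norm q b (n - d) * Rpower (1 - INR d / INR n) b) * (INR n / INR d).
Proof.
  intros Hd Hn. unfold psum_norm. pose proof (psum_diff_ge n d ltac:(lia)) as Hlow.
  assert (Hn0 : 0 < INR n) by (apply lt_0_INR; lia).
  assert (Hd0 : 0 < INR d) by (apply lt_0_INR; lia).
  assert (Hnd : 0 < INR (n - d)) by (apply lt_0_INR; lia).
  rewrite (Rpower_split (INR n) (INR (n - d))) by lra.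
  replace (INR (n - d) / INR n) with (1 - INR d / INR n)
    by (rewrite minus_INR by lia; field; lra).
  rewrite Rpower_1_minus by auto.
  pose proof (Rpower_pos (INR n) b). pose proof (Rpower_pos (1 - INR d / INR n) b).
  replace ((psum q n / Rpower (INR n) b - psum q (n - d) /
            (Rpower (INR n) b * Rpower (1 - INR d / INR n) b) * Rpower (1 - INR d / INR n) b) *
           (INR n / INR d))
    with ((psum q n - psum q (n - d)) / INR d * (INR n / Rpower (INR n) b)) by (field; lra).
  apply Rmult_le_compat_r; [apply Rdiv_le_0_compat; lra|].
  apply Rmult_le_reg_r with (INR d); [lra|]. unfold Rdiv.
  rewrite Rmult_assoc, Rinv_l by lra. lra.
Qed.

End MonotoneDensity.

Lemma Nat_div_bounds m n : (2 <= m)%nat -> (m <= n)%nat ->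
  (1 <= n / m)%nat /\ (m * (n / m) <= n)%nat /\ (n < m * (n / m) + m)%nat /\ (2 * (n / m) <= n)%nat.
Proof.
  intros Hm Hn. pose proof (Nat.div_mod n m ltac:(lia)) as E.
  pose proof (Nat.mod_upper_bound n m ltac:(lia)).
  set (d := (n / m)%nat) in *. set (r := (n mod m)%nat) in *.
  assert (1 <= d)%nat by (destruct d; nia). nia.
Qed.

Lemma is_lim_seq_div_ratio m : (2 <= m)%nat -> is_lim_seq (fun n => INR (n / m) / INR n) (/ INR m).
Proof.
  intros Hm. assert (Hm0 : 0 < INR m) by (apply lt_0_INR; lia).
  apply (is_lim_seq_le_le_loc (fun n => / INR m - / INR n) _ (fun _ => / INR m)).
  - exists m. intros n Hn. destruct (Nat_div_bounds m n Hm Hn) as [_ [H2 [H3 _]]].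
    assert (Hn0 : 0 < INR n) by (apply lt_0_INR; lia).
    apply le_INR in H2. apply lt_INR in H3. rewrite mult_INR in H2. rewrite plus_INR, mult_INR in H3.
    split; apply Rmult_le_reg_r with (INR m * INR n); try nra; field_simplify; nra.
  - pose proof (is_lim_seq_minus' _ _ _ _ (is_lim_seq_const (/ INR m)) is_lim_seq_inv_INR) as Hx.
    rewrite Rminus_0_r in Hx. exact Hx.
  - apply is_lim_seq_const.
Qed.

(* the limits of the two difference quotients, with step n/m, are within b M / (m - 1)
   of b M by Bernoulli's inequalities *)
Lemma density_lower_gap b M m : 0 <= b <= 1 -> 0 <= M -> 2 <= m ->
  b * M - b * M / (m - 1) <= (M * Rpower (1 + / m) b - M) * m.
Proof.
  intros Hb HM Hm. assert (Him : 0 < / m) by (apply Rinv_0_lt_compat; lra).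
  pose proof (Rpower_bernoulli_ge b (/ m) Hb ltac:(lra)) as Hl.
  replace (b * / m / (1 + / m)) with (b / (m + 1)) in Hl by (field; lra).
  apply Rle_trans with (M * (b / (m + 1)) * m).
  - replace (M * (b / (m + 1)) * m) with (b * M - b * M / (m + 1)) by (field; lra).
    assert (b * M / (m + 1) <= b * M / (m - 1))
      by (apply Rmult_le_compat_l; [nra | apply Rinv_le_contravar; lra]).
    lra.
  - apply Rmult_le_compat_r; [lra | nra].
Qed.

Lemma density_upper_gap b M m : 0 <= b <= 1 -> 0 <= M -> 2 <= m ->
  (M - M * Rpower (1 - / m) b) * m <= b * M + b * M / (m - 1).
Proof.
  intros Hb HM Hm. assert (Him : / m <= / 2) by (apply Rinv_le_contravar; lra).
  pose proof (Rpower_bernoulli_ge b (- / m) Hb ltac:(lra)) as Hl.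
  replace (b * - / m / (1 + - / m)) with (- (b / (m - 1))) in Hl by (field; lra).
  replace (1 + - / m) with (1 - / m) in Hl by ring.
  apply Rle_trans with (M * (b / (m - 1)) * m).
  - apply Rmult_le_compat_r; [lra | nra].
  - right. field. lra.
Qed.

Lemma is_lim_seq_ratio_div m : (2 <= m)%nat -> is_lim_seq (fun n => INR n / INR (n / m)) (INR m).
Proof.
  intros Hm. assert (Hm0 : 0 < INR m) by (apply lt_0_INR; lia).
  apply (is_lim_seq_ext_loc (fun n => / (INR (n / m) / INR n))).
  - exists m. intros n Hn. destruct (Nat_div_bounds m n Hm Hn) as [H1 _].
    assert (0 < INR n) by (apply lt_0_INR; lia).
    assert (0 < INR (n / m)) by (apply lt_0_INR; lia).
    field. lra.
  - pose proof (is_lim_seq_inv _ _ (is_lim_seq_div_ratio m Hm)) as Hx.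
    simpl in Hx. rewrite Rinv_inv in Hx. apply Hx.
    intro Hc. injection Hc. apply Rinv_neq_0_compat. lra.
Qed.

Lemma psum_norm_lower_lim q b (M : R) m : (2 <= m)%nat -> is_lim_seq (psum_norm q b) M ->
  is_lim_seq (fun n => (psum_norm q b (n + n / m) * Rpower (1 + INR (n / m) / INR n) b
                        - psum_norm q b n) * (INR n / INR (n / m)))
             ((M * Rpower (1 + / INR m) b - M) * INR m).
Proof.
  intros Hm Hg. assert (Hm0 : 0 < / INR m) by (apply Rinv_0_lt_compat, lt_0_INR; lia).
  apply is_lim_seq_mult'; [|apply is_lim_seq_ratio_div; exact Hm].
  apply is_lim_seq_minus'; [|exact Hg]. apply is_lim_seq_mult'.
  - apply (is_lim_seq_subseq (psum_norm q b) M (fun n => (n + n / m)%nat)); [|exact Hg].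
    intros P [N HN]. exists N. intros n Hn. apply HN. lia.
  - apply (is_lim_seq_continuous (fun x => Rpower x b)); [apply continuity_pt_Rpower_base; lra|].
    apply is_lim_seq_plus'; [apply is_lim_seq_const | apply is_lim_seq_div_ratio; exact Hm].
Qed.

Lemma psum_norm_upper_lim q b (M : R) m : (2 <= m)%nat -> is_lim_seq (psum_norm q b) M ->
  is_lim_seq (fun n => (psum_norm q b n - psum_norm q b (n - n / m)
                        * Rpower (1 - INR (n / m) / INR n) b) * (INR n / INR (n / m)))
             ((M - M * Rpower (1 - / INR m) b) * INR m).
Proof.
  intros Hm Hg.
  assert (Hm2 : / INR m <= / 2)
    by (apply Rinv_le_contravar; [lra | replace 2 with (INR 2) by reflexivity; apply le_INR; lia]).
  apply is_lim_seq_mult'; [|apply is_lim_seq_ratio_div; exact Hm].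
  apply is_lim_seq_minus'; [exact Hg|]. apply is_lim_seq_mult'.
  - apply (is_lim_seq_subseq (psum_norm q b) M (fun n => (n - n / m)%nat)); [|exact Hg].
    intros P [N HN]. exists (2 * N + m)%nat. intros n Hn. apply HN.
    destruct (Nat_div_bounds m n Hm ltac:(lia)) as [_ [_ [_ H4]]]. lia.
  - apply (is_lim_seq_continuous (fun x => Rpower x b)); [apply continuity_pt_Rpower_base; lra|].
    apply is_lim_seq_minus'; [apply is_lim_seq_const | apply is_lim_seq_div_ratio; exact Hm].
Qed.

Theorem monotone_density (q : nat -> R) (b M : R) : 0 <= b <= 1 -> 0 <= M ->
  (forall n, q (S n) <= q n) -> is_lim_seq (psum_norm q b) M ->
  is_lim_seq (fun n => q n * Rpower (INR n) (1 - b)) (b * M).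
Proof.
  intros Hb HM Hq Hg. apply is_lim_seq_spec. intros [eps Heps]. cbn [pos].
  (* choose the step ratio m so large that b M / (m - 1) < eps / 2 *)
  destruct (is_lim_seq_large INR (2 * b * M / eps + 2) is_lim_seq_INR) as [N0 HN0].
  specialize (HN0 N0 (Nat.le_refl _)).
  set (m := (N0 + 2)%nat). assert (Hm : (2 <= m)%nat) by (unfold m; lia).
  assert (Hmr : INR m = INR N0 + 2) by (unfold m; rewrite plus_INR; simpl; ring).
  assert (HbMe : 0 <= 2 * b * M / eps) by (apply Rdiv_le_0_compat; nra).
  assert (Hsmall : b * M / (INR m - 1) < eps / 2).
  { apply Rmult_lt_reg_r with (2 * (INR m - 1) / eps); [apply Rdiv_lt_0_compat; lra|].
    replace (b * M / (INR m - 1) * (2 * (INR m - 1) / eps)) with (2 * b * M / eps) by (field; lra).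
    replace (eps / 2 * (2 * (INR m - 1) / eps)) with (INR m - 1) by (field; lra). lra. }
  pose proof (density_lower_gap b M (INR m) Hb HM ltac:(lra)).
  pose proof (density_upper_gap b M (INR m) Hb HM ltac:(lra)).
  destruct (is_lim_seq_close _ _ (eps / 2) (psum_norm_lower_lim q b M m Hm Hg) ltac:(lra))
    as [N1 HN1].
  destruct (is_lim_seq_close _ _ (eps / 2) (psum_norm_upper_lim q b M m Hm Hg) ltac:(lra))
    as [N2 HN2].
  exists (N1 + N2 + m)%nat. intros n Hn.
  specialize (HN1 n ltac:(lia)). specialize (HN2 n ltac:(lia)).
  destruct (Nat_div_bounds m n Hm ltac:(lia)) as [H1 [H2 [H3 H4]]].
  pose proof (scaled_term_ge q Hq b n (n / m) H1 ltac:(lia)).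
  pose proof (scaled_term_le q Hq b n (n / m) H1 ltac:(lia)).
  apply Rabs_def2 in HN1. apply Rabs_def2 in HN2.
  apply Rabs_def1; lra.
Qed.

(** * The Tauberian step *)

(* If q_N < 0, then for n large 1 = sum_k q_k u_(n-k) <= N d + q_N < 1,
   where d = - q_N / (N + 1) bounds u_(n-k) for k < N. *)
Lemma conv_inverse_nonneg (q u : nat -> R) N :
  (forall k, q (S k) <= q k) -> (forall k, q k <= 1) ->
  u 0%nat = 1 -> (forall n, 0 < u n) -> is_lim_seq u 0 ->
  (forall n, conv q u n = 1) -> 0 <= q N.
Proof.
  intros Hq Hq1 u0 Hu Hul Hconv.
  assert (Hmono : forall k n, (k <= n)%nat -> q n <= q k).
  { intros k n Hkn. induction Hkn; [lra | pose proof (Hq m); lra]. }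
  destruct (Rle_lt_dec 0 (q N)) as [Hle | HqN]; [exact Hle | exfalso].
  set (d := - q N / (INR N + 1)).
  assert (Hd : 0 < d) by (apply Rdiv_lt_0_compat; [lra | apply INR_succ_pos]).
  destruct (is_lim_seq_close u 0 d Hul Hd) as [M0 HM0].
  set (n := (N + M0)%nat).
  pose proof (Hconv n) as I1. unfold conv in I1.
  assert (Hb : sum_lt (fun k => q k * u (n - k)%nat) (S n) <=
               sum_lt (fun k => (if Nat.ltb k N then d else 0) + (if Nat.eqb k n then q N else 0)) (S n)).
  { apply sum_lt_le. intros k Hk. pose proof (Hu (n - k)%nat).
    destruct (Nat.ltb k N) eqn:E1.
    - apply Nat.ltb_lt in E1. replace (Nat.eqb k n) with false by (symmetry; apply Nat.eqb_neq; unfold n; lia).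
      specialize (HM0 (n - k)%nat ltac:(unfold n; lia)).
      rewrite Rminus_0_r, Rabs_pos_eq in HM0 by lra. pose proof (Hq1 k).
      assert (q k * u (n - k)%nat <= 1 * u (n - k)%nat) by (apply Rmult_le_compat_r; lra). lra.
    - apply Nat.ltb_ge in E1. pose proof (Hmono N k E1).
      destruct (Nat.eqb k n) eqn:E2.
      + apply Nat.eqb_eq in E2. subst k. rewrite Nat.sub_diag, u0. lra.
      + assert (q k * u (n - k)%nat <= 0 * u (n - k)%nat) by (apply Rmult_le_compat_r; lra). lra. }
  rewrite sum_lt_plus, sum_lt_indicator, (sum_lt_S (fun k => if Nat.eqb k n then q N else 0)),
    Nat.eqb_refl in Hb.
  rewrite (sum_lt_ext (fun k => if Nat.eqb k n then q N else 0) (fun _ => 0)) in Hb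
    by (intros k Hk; replace (Nat.eqb k n) with false by (symmetry; apply Nat.eqb_neq; lia); reflexivity).
  rewrite sum_lt_zero in Hb. replace (Nat.min (S n) N) with N in Hb by (unfold n; lia).
  assert (INR N * d + q N = q N / (INR N + 1)) by (unfold d; field; apply Rgt_not_eq, INR_succ_pos).
  assert (q N / (INR N + 1) < 0) by (apply Rdiv_neg_pos; [lra | apply INR_succ_pos]).
  lra.
Qed.

Lemma psum_norm_bcoef_lim b (L : R) : 0 < b < 1 -> is_lim_seq (bcoef_scaled b) L ->
  is_lim_seq (psum_norm (bcoef b) b) (L / b).
Proof.
  intros Hb HL. apply is_lim_seq_incr_1.
  apply (is_lim_seq_ext (fun n => bcoef_scaled b n * (1 + b * / INR (S n)) / b)).
  - intros n. unfold psum_norm. rewrite psum_bcoef_scaled by auto. reflexivity.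
  - replace (L / b) with (L * (1 + b * 0) / b) by (field; lra).
    apply is_lim_seq_div'; [|apply is_lim_seq_const | lra].
    apply is_lim_seq_mult'; [exact HL|].
    apply is_lim_seq_plus'; [apply is_lim_seq_const|].
    apply is_lim_seq_mult'; [apply is_lim_seq_const|].
    apply (is_lim_seq_incr_1 (fun n => / INR n) 0). apply is_lim_seq_inv_INR.
Qed.

Lemma is_lim_seq_pinfty_of_psum_norm (B : nat -> R) b (M : R) : 0 < b -> 0 < M ->
  is_lim_seq (psum_norm B b) M -> is_lim_seq (psum B) p_infty.
Proof.
  intros Hb HM HBl. apply is_lim_seq_incr_1.
  apply (is_lim_seq_ext (fun n => Rpower (INR n + 1) b * psum_norm B b (S n))).
  - intros n. unfold psum_norm. rewrite S_INR. pose proof (Rpower_pos (INR n + 1) b).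
    field. lra.
  - apply (is_lim_seq_mult _ _ p_infty M).
    + apply is_lim_seq_Rpower_succ_pinfty. lra.
    + apply (is_lim_seq_incr_1 (psum_norm B b)). exact HBl.
    + apply is_Rbar_mult_p_infty_pos. exact HM.
Qed.

(* bcoef b * bcoef (1 - b) = 1 / (1 - z), so
   bcoef b * u - C = bcoef b * (bcoef (1 - b) (u / bcoef (1 - b) - C)). *)
Lemma conv_bcoef_lim b (u : nat -> R) (C E : R) : 0 < b < 1 ->
  (forall i, Rabs (u i / bcoef (1 - b) i - C) <= E) ->
  is_lim_seq (fun i => u i / bcoef (1 - b) i - C) 0 ->
  is_lim_seq (conv (bcoef b) u) C /\ forall j, Rabs (conv (bcoef b) u j - C) <= E.
Proof.
  intros Hb HE He. set (a := bcoef (1 - b)). set (e := fun i => u i / a i - C).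
  assert (Ha : forall i, 0 <= a i <= 1)
    by (intros i; split; [left; apply bcoef_pos | apply bcoef_le_1]; lra).
  assert (Hbp : forall i, 0 <= bcoef b i) by (intros; left; apply bcoef_pos; lra).
  assert (Hconv : forall j, conv (bcoef b) a j = 1) by (intros; apply conv_bcoef_compl; ring).
  assert (Hdiff : forall j, conv (bcoef b) u j - C = conv (bcoef b) (fun i => a i * e i) j).
  { intros j. rewrite <- (Rmult_1_r C) at 1. rewrite <- (Hconv j).
    unfold conv, e. rewrite <- sum_lt_scal, <- sum_lt_minus. apply sum_lt_ext. intros k Hk.
    assert (0 < a (j - k)%nat) by (apply bcoef_pos; lra). field. lra. }
  split.
  - apply (is_lim_seq_ext (fun j => conv (bcoef b) (fun i => a i * e i) j + C)).
    { intros j. rewrite <- Hdiff. ring. }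
    replace (Finite C) with (Rbar_plus 0 C) by (simpl; f_equal; ring).
    apply is_lim_seq_plus'; [|apply is_lim_seq_const].
    apply (conv_weighted_to_0 _ a e E); auto. apply is_lim_seq_bcoef_0. exact Hb.
  - intros j. rewrite Hdiff. unfold conv. eapply Rle_trans; [apply sum_lt_abs|].
    apply Rle_trans with (sum_lt (fun k => E * (bcoef b k * a (j - k)%nat)) (S j)).
    + apply sum_lt_le. intros k Hk. rewrite !Rabs_mult.
      rewrite (Rabs_pos_eq (bcoef b k)), (Rabs_pos_eq (a (j - k)%nat)) by apply Hbp || apply Ha.
      assert (Hek : Rabs (e (j - k)%nat) <= E) by apply HE.
      pose proof (Ha (j - k)%nat). pose proof (Hbp k).
      assert (0 <= bcoef b k * a (j - k)%nat) by nra.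
      rewrite <- Rmult_assoc, (Rmult_comm E). apply Rmult_le_compat_l; lra.
    + rewrite sum_lt_scal. fold (conv (bcoef b) a j). rewrite Hconv. lra.
Qed.

(* q * v ~ C psum q because v -> C and psum q -> oo. *)
Lemma psum_norm_lim_of_conv (q v B : nat -> R) (b C E M : R) : 0 < b -> 0 < C -> 0 < M ->
  (forall k, 0 <= q k <= 1) -> (forall n, 0 < psum q n) ->
  (forall j, Rabs (v j - C) <= E) -> is_lim_seq v C ->
  (forall n, conv q v n = psum B n) -> is_lim_seq (psum_norm B b) M ->
  is_lim_seq (psum_norm q b) (M / C) /\ is_lim_seq (psum q) p_infty.
Proof.
  intros Hb HC HM Hq HQp HE Hv Hconv HB.
  assert (HE0 : 0 <= E) by (pose proof (HE 0%nat); pose proof (Rabs_pos (v 0%nat - C)); lra).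
  pose proof (is_lim_seq_pinfty_of_psum_norm B b M Hb HM HB) as HBinf.
  assert (HQinf : is_lim_seq (psum q) p_infty).
  { apply (is_lim_seq_le_p_loc (fun n => psum B n * / (C + E))).
    - exists 0%nat. intros n _. rewrite <- Hconv. unfold conv, psum.
      apply Rmult_le_reg_r with (C + E); [lra|].
      rewrite Rmult_assoc, Rinv_l, Rmult_1_r, Rmult_comm, <- sum_lt_scal by lra.
      apply sum_lt_le. intros k Hk.
      pose proof (HE (n - k)%nat) as Hvk. apply Rabs_le_between' in Hvk. pose proof (Hq k).
      assert (q k * v (n - k)%nat <= q k * (C + E)) by (apply Rmult_le_compat_l; lra). lra.
    - apply (is_lim_seq_mult _ _ p_infty (/ (C + E))).
      + exact HBinf.
      + apply is_lim_seq_const.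
      + apply is_Rbar_mult_p_infty_pos. simpl. apply Rinv_0_lt_compat. lra. }
  split; [|exact HQinf].
  pose proof (conv_div_psum_lim q v C E Hq HE Hv HQinf HQp) as Hrat.
  destruct (is_lim_seq_large (psum B) 0 HBinf) as [N HN].
  apply (is_lim_seq_ext_loc (fun n => psum_norm B b n / (conv q v n / psum q n))).
  - exists N. intros n Hn. specialize (HN n Hn). unfold psum_norm. rewrite Hconv.
    pose proof (HQp n). pose proof (Rpower_pos (INR n) b). field. lra.
  - apply is_lim_seq_div'; auto. lra.
Qed.

(** * From sequences to the tail function *)

Lemma slowly_varying_of_lim (L : R -> R) (K : R) : 0 < K ->
  is_lim L p_infty K -> slowly_varying L.
Proof.
  intros HK HL. split.
  - apply is_lim_spec in HL. destruct (HL (mkposreal (K / 2) ltac:(lra))) as [M HM].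
    exists M. intros x Hx. specialize (HM x Hx). simpl in HM. apply Rabs_def2 in HM. lra.
  - intros lam Hlam.
    assert (Hc : is_lim (fun x => L (lam * x)) p_infty K).
    { apply (is_lim_comp L (fun x => lam * x) p_infty K p_infty); auto.
      - apply is_lim_spec. intros M. exists (M / lam). intros x Hx.
        apply Rmult_lt_reg_l with (/ lam); [apply Rinv_0_lt_compat; lra|].
        replace (/ lam * (lam * x)) with x by (field; lra). unfold Rdiv in Hx. lra.
      - exists 0. intros x _. discriminate. }
    pose proof (is_lim_div _ _ p_infty K K Hc HL ltac:(intro Hx; injection Hx; lra)
      ltac:(simpl; auto)) as Hd.
    replace (Rbar_div K K) with (Finite 1) in Hd by (simpl; f_equal; field; lra). exact Hd.
Qed.

Lemma is_lim_step_scaled (q : nat -> R) (F : R -> R) (g K : R) : 0 <= g ->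
  (forall n, 0 <= q n) -> (forall N t, INR N <= t < INR N + 1 -> F t = q N) ->
  is_lim_seq (fun n => q n * Rpower (INR n) g) K ->
  is_lim (fun t => F t * Rpower t g) p_infty K.
Proof.
  intros Hg Hq HF Hs.
  assert (Hr : is_lim_seq (fun n => Rpower (1 + / INR n) g) 1).
  { pose proof (is_lim_seq_continuous (fun x => Rpower x g) _ (1 + 0)
      ltac:(apply continuity_pt_Rpower_base; lra)
      (is_lim_seq_plus' _ _ _ _ (is_lim_seq_const 1) is_lim_seq_inv_INR)) as Hx.
    rewrite Rplus_0_r, Rpower_1_base in Hx. exact Hx. }
  assert (Hsr : is_lim_seq (fun n => q n * Rpower (INR n) g * Rpower (1 + / INR n) g) K).
  { pose proof (is_lim_seq_mult' _ _ _ _ Hs Hr) as Hx. rewrite Rmult_1_r in Hx. exact Hx. }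
  apply is_lim_spec. intros eps. simpl.
  destruct (is_lim_seq_close _ _ eps Hs (cond_pos eps)) as [N1 HN1].
  destruct (is_lim_seq_close _ _ eps Hsr (cond_pos eps)) as [N2 HN2].
  exists (INR (N1 + N2) + 1). intros x Hx.
  assert (Hx0 : 0 <= x) by (pose proof (pos_INR (N1 + N2)); lra).
  destruct (nfloor_ex x Hx0) as [N HN].
  assert (HNN : (N1 + N2 < N)%nat) by (apply INR_lt; lra).
  assert (HN0 : 0 < INR N) by (apply lt_0_INR; lia).
  rewrite (HF N x HN).
  specialize (HN1 N ltac:(lia)). specialize (HN2 N ltac:(lia)).
  apply Rabs_def2 in HN1. apply Rabs_def2 in HN2. pose proof (Hq N).
  (* N <= x < N + 1 squeezes x^g between N^g and N^g (1 + 1/N)^g *)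
  assert (Rpower (INR N) g <= Rpower x g) by (apply Rle_Rpower_l; lra).
  assert (Rpower x g <= Rpower (INR N) g * Rpower (1 + / INR N) g).
  { replace (1 + / INR N) with ((INR N + 1) / INR N) by (field; lra).
    rewrite <- (Rpower_split (INR N) (INR N + 1)) by lra.
    apply Rle_Rpower_l; lra. }
  assert (q N * Rpower (INR N) g <= q N * Rpower x g) by (apply Rmult_le_compat_l; lra).
  assert (q N * Rpower x g <= q N * Rpower (INR N) g * Rpower (1 + / INR N) g)
    by (rewrite Rmult_assoc; apply Rmult_le_compat_l; lra).
  apply Rabs_def1; lra.
Qed.

(* for a tail sequence q this is the truncated mean sum_(k <= n) k (q_(k-1) - q_k) *)
Lemma psum_minus_last_pinfty (q : nat -> R) :
  (forall n, q (S n) <= q n) -> (forall n, 0 <= q n) -> is_lim_seq q 0 ->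
  is_lim_seq (psum q) p_infty ->
  is_lim_seq (fun n => sum_lt q n - INR n * q n) p_infty.
Proof.
  intros Hq Hq0 Hql HQ. apply is_lim_seq_spec. intros A.
  assert (Hmono : forall m n, (m <= n)%nat -> sum_lt q m - INR m * q n <= sum_lt q n - INR n * q n).
  { intros m n Hmn. induction Hmn; [lra|].
    rewrite sum_lt_S, S_INR. pose proof (Hq m0). pose proof (Hq0 (S m0)). apply le_INR in Hmn.
    assert ((INR m0 + 1 - INR m) * q (S m0) <= (INR m0 + 1 - INR m) * q m0)
      by (apply Rmult_le_compat_l; lra).
    nra. }
  destruct (is_lim_seq_large _ (A + 1) HQ) as [m' Hm']. specialize (Hm' m' (Nat.le_refl _)).
  set (m := S m'). pose proof (INR_succ_pos m).
  destruct (is_lim_seq_close _ 0 (/ (INR m + 1)) Hql ltac:(apply Rinv_0_lt_compat; lra))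
    as [N HN].
  exists (N + m)%nat. intros n Hn.
  pose proof (Hmono m n ltac:(unfold m in *; lia)).
  specialize (HN n ltac:(lia)). rewrite Rminus_0_r, Rabs_pos_eq in HN by apply Hq0.
  assert (INR m * q n < 1).
  { apply Rle_lt_trans with ((INR m + 1) * q n); [pose proof (Hq0 n); nra|].
    apply Rmult_lt_reg_l with (/ (INR m + 1)); [apply Rinv_0_lt_compat; lra|].
    rewrite <- Rmult_assoc, Rinv_l by lra. lra. }
  unfold psum in Hm'. fold m in Hm'. lra.
Qed.

(** * Asymptotics of the tail of T° *)

Definition beta (H : R) : R := 2 - 2 * H.

Definition tailq (H c : R) (n : nat) : R := 1 - psum (pT H c) n.

Lemma tailq_0 H c : tailq H c 0 = 1.
Proof. unfold tailq, psum. simpl. ring. Qed.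

Lemma tailq_S H c n : tailq H c (S n) = tailq H c n - pT H c (S n).
Proof. unfold tailq, psum. rewrite (sum_lt_S _ (S n)). ring. Qed.

Lemma tailq_conv_u H c n : conv (tailq H c) (renewal_u H c) n = 1.
Proof. apply renewal_tail_conv; [reflexivity | reflexivity | apply renewal_u_eq]. Qed.

Lemma renewal_u_S H c n : renewal_u H c (S n) = c * Rpower (INR n + 1) (- beta H).
Proof. unfold renewal_u, rho, beta. rewrite S_INR. do 2 f_equal. ring. Qed.

Section Tail.

Variables H c : R.
Hypothesis hH : 1 / 2 < H < 1.
Hypothesis hc : 0 < c < Rpower 2 (2 * H - 2).

Lemma beta_range : 0 < beta H < 1.
Proof. unfold beta. lra. Qed.

Lemma tailq_decr n : tailq H c (S n) <= tailq H c n.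
Proof. rewrite tailq_S. pose proof (pT_nonneg H c (S n) ltac:(lra) ltac:(lra)). lra. Qed.

Lemma tailq_le_1 n : tailq H c n <= 1.
Proof. induction n; [rewrite tailq_0; lra | pose proof (tailq_decr n); lra]. Qed.

Lemma is_lim_seq_renewal_u_0 : is_lim_seq (renewal_u H c) 0.
Proof.
  apply is_lim_seq_incr_1. apply (is_lim_seq_ext (fun n => c * Rpower (INR n + 1) (- beta H))).
  - intros; rewrite renewal_u_S; reflexivity.
  - replace (Finite 0) with (Rbar_mult c 0) by (simpl; f_equal; ring).
    apply is_lim_seq_scal_l. apply is_lim_seq_Rpower_succ_0, beta_range.
Qed.

Lemma tailq_nonneg n : 0 <= tailq H c n.
Proof.
  apply (conv_inverse_nonneg _ (renewal_u H c)).
  - exact tailq_decr.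
  - exact tailq_le_1.
  - reflexivity.
  - intros; apply renewal_u_pos; lra.
  - exact is_lim_seq_renewal_u_0.
  - apply tailq_conv_u.
Qed.

Lemma renewal_u_div_bcoef n :
  renewal_u H c (S n) / bcoef (1 - beta H) (S n) = c / bcoef_scaled (1 - beta H) n.
Proof.
  pose proof beta_range.
  rewrite renewal_u_S. unfold bcoef_scaled.
  replace (1 - (1 - beta H)) with (beta H) by ring. rewrite S_INR, Rpower_Ropp.
  pose proof (bcoef_pos (1 - beta H) (S n) ltac:(lra)). pose proof (Rpower_pos (INR n + 1) (beta H)).
  field. lra.
Qed.

Lemma renewal_u_div_bcoef_lim : exists C E, 0 < C /\
  (forall i, Rabs (renewal_u H c i / bcoef (1 - beta H) i - C) <= E) /\
  is_lim_seq (fun i => renewal_u H c i / bcoef (1 - beta H) i - C) 0.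
Proof.
  pose proof beta_range.
  destruct (bcoef_scaled_lim (1 - beta H) ltac:(lra)) as [La [HLa HLal]].
  exists (c / La), (1 + c / (1 - beta H) + c / La).
  assert (0 < c / La) by (apply Rdiv_lt_0_compat; lra).
  assert (0 < c / (1 - beta H)) by (apply Rdiv_lt_0_compat; lra).
  split; [|split].
  - assumption.
  - intros [|n]; [simpl; rewrite Rdiv_1_r; apply Rabs_le; lra|].
    rewrite renewal_u_div_bcoef. pose proof (bcoef_scaled_ge (1 - beta H) n ltac:(lra)).
    assert (0 < c / bcoef_scaled (1 - beta H) n <= c / (1 - beta H)).
    { split; [apply Rdiv_lt_0_compat; lra|].
      apply Rmult_le_compat_l; [lra | apply Rinv_le_contravar; lra]. }
    apply Rabs_le. lra.
  - apply is_lim_seq_incr_1.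
    apply (is_lim_seq_ext (fun n => c * / bcoef_scaled (1 - beta H) n - c / La)).
    { intros n. rewrite renewal_u_div_bcoef. reflexivity. }
    replace (Finite 0) with (Finite (c * / La - c / La)) by (f_equal; field; lra).
    apply is_lim_seq_minus'; [|apply is_lim_seq_const].
    apply is_lim_seq_mult'; [apply is_lim_seq_const|].
    pose proof (is_lim_seq_inv _ _ HLal ltac:(intro Hx; injection Hx; lra)) as Hx.
    simpl in Hx. exact Hx.
Qed.

Lemma tailq_asymptotics : exists K, 0 < K /\
  is_lim_seq (fun n => tailq H c n * Rpower (INR n) (1 - beta H)) K /\
  is_lim_seq (psum (tailq H c)) p_infty.
Proof.
  pose proof beta_range.
  destruct renewal_u_div_bcoef_lim as [C [E [HC [HE He]]]].
  destruct (conv_bcoef_lim (beta H) (renewal_u H c) C E ltac:(lra) HE He) as [Hv HvE].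
  destruct (bcoef_scaled_lim (beta H) ltac:(lra)) as [Lb [HLb HLbl]].
  assert (Hq : forall k, 0 <= tailq H c k <= 1) by (split; [apply tailq_nonneg | apply tailq_le_1]).
  assert (HQp : forall n, 0 < psum (tailq H c) n).
  { intros n. unfold psum. rewrite sum_lt_Sl, tailq_0.
    pose proof (sum_lt_nonneg (fun i => tailq H c (S i)) n (fun i _ => proj1 (Hq (S i)))). lra. }
  destruct (psum_norm_lim_of_conv (tailq H c) (conv (bcoef (beta H)) (renewal_u H c))
              (bcoef (beta H)) (beta H) C E (Lb / beta H) ltac:(lra) HC
              ltac:(apply Rdiv_lt_0_compat; lra) Hq HQp HvE Hv
              (fun n => conv_inverse_conv _ _ _ n (tailq_conv_u H c))
              (psum_norm_bcoef_lim (beta H) Lb ltac:(lra) HLbl)) as [HQ HQinf].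
  exists (beta H * (Lb / beta H / C)). split; [|split; [|exact HQinf]].
  - apply Rmult_lt_0_compat; [lra|]. apply Rdiv_lt_0_compat; [apply Rdiv_lt_0_compat|]; lra.
  - apply monotone_density; [lra | | exact tailq_decr | exact HQ].
    left. apply Rdiv_lt_0_compat; [apply Rdiv_lt_0_compat|]; lra.
Qed.

Lemma is_lim_seq_tailq_0 : is_lim_seq (tailq H c) 0.
Proof.
  destruct tailq_asymptotics as [K [_ [Hl _]]]. pose proof beta_range.
  apply is_lim_seq_incr_1.
  apply (is_lim_seq_ext (fun n => tailq H c (S n) * Rpower (INR (S n)) (1 - beta H) *
                                  Rpower (INR n + 1) (- (1 - beta H)))).
  - intros n. rewrite Rpower_Ropp, S_INR. pose proof (Rpower_pos (INR n + 1) (1 - beta H)).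
    field. lra.
  - replace (Finite 0) with (Finite (K * 0)) by (f_equal; ring).
    apply is_lim_seq_mult'; [exact (proj1 (is_lim_seq_incr_1 _ _) Hl) |].
    apply is_lim_seq_Rpower_succ_0. lra.
Qed.

Lemma tailT_eq t N : INR N <= t < INR N + 1 -> tailT H c t = tailq H c N.
Proof.
  intros Ht. unfold tailT. apply is_series_unique.
  set (a := fun k => if Rlt_dec t (INR k) then pT H c k else 0).
  assert (Hpartial : forall j, sum_lt a (S (N + j)) = psum (pT H c) (N + j) - psum (pT H c) N).
  { unfold psum. induction j.
    - rewrite Nat.add_0_r, (sum_lt_ext a (fun _ => 0)), sum_lt_zero; [ring|].
      intros k Hk. unfold a. destruct (Rlt_dec t (INR k)) as [Hlt|]; [|reflexivity].
      exfalso. assert (INR k <= INR N) by (apply le_INR; lia). lra.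
    - replace (N + S j)%nat with (S (N + j)) by lia. rewrite !(sum_lt_S _ (S (N + j))), IHj.
      unfold a. destruct (Rlt_dec t (INR (S (N + j)))) as [|Hnlt]; [ring|].
      exfalso. apply Hnlt. rewrite S_INR, plus_INR. pose proof (pos_INR j). lra. }
  enough (Hl : is_lim_seq (sum_n a) (tailq H c N)) by exact Hl.
  apply (is_lim_seq_ext_loc (fun n => tailq H c N - tailq H c n)).
  - exists N. intros n Hn. rewrite sum_n_sum_lt.
    replace n with (N + (n - N))%nat by lia. rewrite Hpartial. unfold tailq. ring.
  - replace (Finite (tailq H c N)) with (Rbar_minus (tailq H c N) 0) by (simpl; f_equal; ring).
    apply is_lim_seq_minus'; [apply is_lim_seq_const | exact is_lim_seq_tailq_0].
Qed.

End Tail.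

Lemma ET_partial_eq H c n : ET_partial H c n = sum_lt (tailq H c) n - INR n * tailq H c n.
Proof.
  unfold ET_partial. rewrite sum_n_sum_lt. induction n; [simpl; ring|].
  rewrite sum_lt_S, IHn, (sum_lt_S (tailq H c)), tailq_S, S_INR. ring.
Qed.

Theorem theorem3p7 (H c : R) (hH : 1/2 < H < 1) (hc : 0 < c < Rpower 2 (2 * H - 2)) :
  is_lim_seq (ET_partial H c) p_infty /\
  exists L2 : R -> R, slowly_varying L2 /\
    forall t, 0 < t -> tailT H c t = Rpower t (1 - 2 * H) * L2 t.
Proof.
  destruct (tailq_asymptotics H c hH hc) as [K [HK [Hasym HQinf]]].
  split.
  - apply (is_lim_seq_ext _ _ _ (fun n => eq_sym (ET_partial_eq H c n))).
    apply psum_minus_last_pinfty; auto using tailq_decr, tailq_nonneg, is_lim_seq_tailq_0.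
  - exists (fun t => tailT H c t * Rpower t (1 - beta H)). split.
    + apply (slowly_varying_of_lim _ K HK).
      apply (is_lim_step_scaled (tailq H c)); auto using tailq_nonneg.
      * unfold beta. lra.
      * intros N t Ht. apply tailT_eq; auto.
    + intros t Ht.
      assert (E : Rpower t (1 - 2 * H) * Rpower t (1 - beta H) = 1).
      { rewrite <- Rpower_plus. replace (1 - 2 * H + (1 - beta H)) with 0 by (unfold beta; ring).
        apply Rpower_O, Ht. }
      transitivity (tailT H c t * (Rpower t (1 - 2 * H) * Rpower t (1 - beta H))); [rewrite E|]; ring.
Qed.
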